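(* Let $n\ge4$, $x_1,\dots,x_{n-1}>0$, $\gamma,\delta>0$ with $\gamma\ne1\ne\delta$, $x_0=1$, and let $\mathbf{P}$ be the $n\times n$ matrix with entries $p_{ij}=x_{j-1}/x_{i-1}$ except $p_{12}=\delta x_1$, $p_{21}=1/(\delta x_1)$, $p_{13}=\gamma x_2$, $p_{31}=1/(\gamma x_2)$. Let $\mathbf{w}^{EM}$ be the principal right eigenvector of $\mathbf{P}$. Then $\delta<\gamma$ iff $w_2^{EM}/w_3^{EM}>x_2/x_1$; $\delta=\gamma$ iff $w_2^{EM}/w_3^{EM}=x_2/x_1$; and $\delta>\gamma$ iff $w_2^{EM}/w_3^{EM}<x_2/x_1$.
   Context: The principal right eigenvector is the positive (Perron) eigenvector belonging to the largest eigenvalue. *)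

From HB Require Import structures.
From mathcomp Require Import all_boot all_order all_algebra.
From mathcomp Require Import reals.
Set Implicit Arguments. Unset Strict Implicit. Unset Printing Implicit Defensive.
Import Order.TTheory GRing.Theory Num.Theory.
Local Open Scope ring_scope.

(* Indices are 0-based: paper index i (1..n) is Rocq index i-1 (0..n-1).
   x : nat -> R with x 0 = 1 (the paper's x_0), paper x_k = x k.
   Paper p_ij = x_{j-1}/x_{i-1}  becomes  P i j = x j / x i (0-based),
   with the four perturbed entries p12, p21, p13, p31. *)
Definition PEM (R : realType) (n : nat) (x : nat -> R) (delta gamma : R)
  : 'M[R]_n :=
  \matrix_(i < n, j < n)
    if (val i == 0%N) && (val j == 1%N) then delta * x 1%N
    else if (val i == 1%N) && (val j == 0%N) then (delta * x 1%N)^-1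
    else if (val i == 0%N) && (val j == 2%N) then gamma * x 2%N
    else if (val i == 2%N) && (val j == 0%N) then (gamma * x 2%N)^-1
    else x (val j) / x (val i).

(* Principal right eigenvector: a positive (Perron) right eigenvector whose
   eigenvalue is the largest eigenvalue of the matrix.  [eigenvalue] is
   MathComp's notion (left/right spectra coincide). *)
Definition principal_right_eigenvector (R : realType) (n : nat)
  (P : 'M[R]_n) (w : 'cV[R]_n) : Prop :=
  (forall i, 0 < w i 0) /\
  exists lambda : R, P *m w = lambda *: w /\
    eigenvalue P lambda /\ (forall mu, eigenvalue P mu -> mu <= lambda).

Definition cvnth (R : realType) (n : nat) (w : 'cV[R]_n) (k : nat) : R :=
  match insub k with Some i => w i 0 | None => 0 end.

(* Scaled by x_i, rows 2 and 3 of P coincide except in the first column, where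
   they read 1/delta and 1/gamma.  Subtracting the two corresponding rows of
   P w = lambda w therefore gives
     lambda (x_1 w_2 - x_2 w_3) = (1/delta - 1/gamma) w_1,
   and since lambda and w are positive, w_2/w_3 - x_2/x_1 has the sign of
   gamma - delta. *)

From HB Require Import structures.
From mathcomp Require Import all_boot all_order all_algebra.
From mathcomp Require Import reals.
From mathcomp Require Import ring.
Set Implicit Arguments. Unset Strict Implicit. Unset Printing Implicit Defensive.
Import Order.TTheory GRing.Theory Num.Theory.
Local Open Scope ring_scope.

Lemma cvnthE (R : realType) (n : nat) (w : 'cV[R]_n) (k : nat) (lt_kn : (k < n)%N) :
  cvnth w k = w (Ordinal lt_kn) 0.
Proof.
rewrite /cvnth; case: insubP => [i _ vi|]; last by rewrite /= lt_kn.
by congr (w _ 0); apply: val_inj.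
Qed.

Lemma eigen_rowE (R : pzRingType) (n : nat) (A : 'M[R]_n) (w : 'cV[R]_n) (l : R)
    (i : 'I_n) :
  A *m w = l *: w -> \sum_j A i j * w j 0 = l * w i 0.
Proof.
by move=> Aw; have := congr1 (fun M : 'cV[R]_n => M i 0) Aw; rewrite /= !mxE.
Qed.

Lemma eigenvalue_gt0 (R : numDomainType) (n : nat) (A : 'M[R]_n) (w : 'cV[R]_n)
    (l : R) (i : 'I_n) :
  (forall j k, 0 <= A j k) -> 0 < A i i -> (forall j, 0 < w j 0) ->
  A *m w = l *: w -> 0 < l.
Proof.
move=> A_ge0 Aii_gt0 w_gt0 Aw.
have : 0 < l * w i 0.
  rewrite -(eigen_rowE i Aw) (bigD1 i) //= ltr_wpDr ?mulr_gt0 //.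
  by apply: sumr_ge0 => j _; rewrite mulr_ge0 // ltW.
by rewrite pmulr_lgt0.
Qed.

Lemma sign_trichotomy (R : realDomainType) (a b d g K : R) :
  0 < K -> a - b = (g - d) * K ->
  [/\ d < g <-> a > b, d = g <-> a = b & d > g <-> a < b].
Proof.
move=> K_gt0 abK; split.
- by rewrite -[b < a]subr_gt0 abK pmulr_lgt0 // subr_gt0.
- split=> [dg|/eqP]; first by apply/eqP; rewrite -subr_eq0 abK dg subrr mul0r.
  by rewrite -subr_eq0 abK mulf_eq0 (gt_eqF K_gt0) orbF subr_eq0 => /eqP.
- by rewrite -[a < b]subr_lt0 abK pmulr_llt0 // subr_lt0.
Qed.

Section PEMRows.

Variables (R : realType) (n : nat) (x : nat -> R) (delta gamma : R).
Let P := PEM n x delta gamma.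

Lemma PEM_gt0 (i j : 'I_n) :
  0 < delta -> 0 < gamma -> (forall k, (k < n)%N -> 0 < x k) -> 0 < P i j.
Proof.
move=> delta_gt0 gamma_gt0 x_gt0.
have xi_gt0 : 0 < x i by apply: x_gt0.
have xj_gt0 : 0 < x j by apply: x_gt0.
rewrite /P /PEM mxE.
case: ifP => [/andP[_ /eqP <-]|_]; first by rewrite mulr_gt0.
case: ifP => [/andP[/eqP <- _]|_]; first by rewrite invr_gt0 mulr_gt0.
case: ifP => [/andP[_ /eqP <-]|_]; first by rewrite mulr_gt0.
case: ifP => [/andP[/eqP <- _]|_]; first by rewrite invr_gt0 mulr_gt0.
by rewrite divr_gt0.
Qed.

Lemma mulx_PEM_row (i j : 'I_n) :
  (val i = 1 \/ val i = 2)%N -> val j <> 0%N -> x i != 0 -> x i * P i j = x j.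
Proof.
move=> vi vj xi_neq0; rewrite /P /PEM mxE.
have -> : (val j == 0%N) = false by apply/eqP.
rewrite -[x i]/(x (val i)) in xi_neq0 *.
by case: vi xi_neq0 => -> xi_neq0 /=; rewrite ?andbF /=; field.
Qed.

Lemma mulx_eigen_row (w : 'cV[R]_n) (l : R) (i i0 : 'I_n) :
  (val i = 1 \/ val i = 2)%N -> val i0 = 0%N -> x i != 0 -> P *m w = l *: w ->
  x i * (l * w i 0) = x i * P i i0 * w i0 0 + \sum_(j | j != i0) x j * w j 0.
Proof.
move=> vi vi0 xi_neq0 Pw.
rewrite -(eigen_rowE i Pw) (bigD1 i0) //= mulrDr mulrA; congr (_ + _).
rewrite mulr_sumr; apply: eq_bigr => j j_neq_i0.
rewrite mulrA mulx_PEM_row // => vj.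
by move/eqP: j_neq_i0; apply; apply: val_inj; rewrite vj vi0.
Qed.

Lemma mulx_PEM_10 (i i0 : 'I_n) :
  val i = 1%N -> val i0 = 0%N -> x 1%N != 0 -> x i * P i i0 = delta^-1.
Proof.
move=> vi vi0 x1_neq0; rewrite /P /PEM mxE vi0 -[x i]/(x (val i)) vi /=.
by rewrite invfM mulrCA divff ?mulr1.
Qed.

Lemma mulx_PEM_20 (i i0 : 'I_n) :
  val i = 2%N -> val i0 = 0%N -> x 2%N != 0 -> x i * P i i0 = gamma^-1.
Proof.
move=> vi vi0 x2_neq0; rewrite /P /PEM mxE vi0 -[x i]/(x (val i)) vi /=.
by rewrite invfM mulrCA divff ?mulr1.
Qed.

End PEMRows.

Lemma eigen_ratio_gap (R : realFieldType) (l delta gamma w0 w1 w2 x1 x2 : R) :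
  l != 0 -> delta != 0 -> gamma != 0 -> x1 != 0 -> w2 != 0 ->
  x1 * (l * w1) - x2 * (l * w2) = (delta^-1 - gamma^-1) * w0 ->
  w1 / w2 - x2 / x1 = (gamma - delta) * (w0 / (l * delta * gamma * x1 * w2)).
Proof.
move=> l_neq0 d_neq0 g_neq0 x1_neq0 w2_neq0 rows.
have -> : w1 = (l * x2 * w2 + (delta^-1 - gamma^-1) * w0) / (l * x1).
  by rewrite -rows; field; rewrite x1_neq0 l_neq0.
by field; apply/and5P.
Qed.

Theorem mainTheorem9 (R : realType) (n : nat) (x : nat -> R)
  (gamma delta : R) (w : 'cV[R]_n) :
  (4 <= n)%N ->
  x 0%N = 1 ->
  (forall k : nat, (1 <= k < n)%N -> 0 < x k) ->
  0 < gamma -> 0 < delta -> gamma != 1 -> delta != 1 ->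
  principal_right_eigenvector (PEM n x delta gamma) w ->
  [/\ delta < gamma <-> cvnth w 1 / cvnth w 2 > x 2%N / x 1%N,
      delta = gamma <-> cvnth w 1 / cvnth w 2 = x 2%N / x 1%N
    & delta > gamma <-> cvnth w 1 / cvnth w 2 < x 2%N / x 1%N].
Proof.
move=> n_ge4 x0 x_gt0 gamma_gt0 delta_gt0 _ _ [w_gt0 [l [Pw _]]].
have xk_gt0 k : (k < n)%N -> 0 < x k.
  by case: k => [|k] lt_kn; [rewrite x0 | apply: x_gt0].
have lt0n : (0 < n)%N by apply: leq_trans n_ge4.
have lt1n : (1 < n)%N by apply: leq_trans n_ge4.
have lt2n : (2 < n)%N by apply: leq_trans n_ge4.
pose i0 := Ordinal lt0n; pose i1 := Ordinal lt1n; pose i2 := Ordinal lt2n.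
have l_gt0 : 0 < l.
  by apply: (eigenvalue_gt0 (i := i0)) Pw => [j k||]; rewrite ?ltW ?PEM_gt0.
have x1_neq0 : x 1%N != 0 by rewrite gt_eqF ?xk_gt0.
have x2_neq0 : x 2%N != 0 by rewrite gt_eqF ?xk_gt0.
have row1 := mulx_eigen_row (i := i1) (i0 := i0) (or_introl erefl) erefl x1_neq0 Pw.
have row2 := mulx_eigen_row (i := i2) (i0 := i0) (or_intror erefl) erefl x2_neq0 Pw.
rewrite mulx_PEM_10 // in row1.
rewrite mulx_PEM_20 // in row2.
have rows : x 1%N * (l * w i1 0) - x 2%N * (l * w i2 0)
            = (delta^-1 - gamma^-1) * w i0 0.
  by rewrite row1 row2; ring.
rewrite (cvnthE w lt1n) (cvnthE w lt2n).
apply: sign_trichotomy (eigen_ratio_gap _ _ _ _ _ rows).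
- by rewrite divr_gt0 ?w_gt0 // !mulr_gt0 ?w_gt0 ?xk_gt0.
all: by rewrite gt_eqF ?w_gt0 ?xk_gt0.
Qed.
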